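(* Let $G$ be a finite group, $N$ a normal subgroup of $G$, and $A$, $B$ conjugacy classes of $G$. Suppose there exist $a\in A$ and $b\in B$ such that $AB\subseteq ab\,\mathbf{Z}(N)$. Then $\mathbf{C}_N(A)\cap\mathbf{C}_N(B)\supseteq [N,N]$. In particular $\operatorname{dl}(N/\mathbf{C}_N(A))\le 1$.
   Context: $AB=\{xy\mid x\in A,y\in B\}$; $ab\,\mathbf{Z}(N)=\{abz\mid z\in\mathbf{Z}(N)\}$ where $\mathbf{Z}(N)$ is the center of $N$. For a subset $X\subseteq G$, $\mathbf{C}_N(X)=\{n\in N\mid n^{-1}xn=x\text{ for all }x\in X\}$. $[N,N]$ is the derived subgroup of $N$ and $\operatorname{dl}$ denotes derived length. *)

From mathcomp Require Import all_boot all_fingroup all_solvable.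

(* For x in A and k in N, both x b and x^k b lie in ab Z(N), so their quotient
   [x, k]^b, hence [x, k], is central in N; likewise [y, k] for y in B.
   Once all [x, k] (k in N) are central in N, the map k |-> x^k satisfies
   x^(kl) = x^(lk), so x is fixed by every commutator of N. *)
From mathcomp Require Import all_boot all_fingroup all_solvable.
Set Implicit Arguments.
Unset Strict Implicit.
Unset Printing Implicit Defensive.
Local Open Scope group_scope.

Section CommutatorsInCenter.

Variable gT : finGroupType.
Implicit Types (c k l n m u v x y : gT) (G H N : {group gT}) (A : {set gT}).

Lemma classes_subG G A x : A \in classes G -> x \in A -> x \in G.
Proof. by case/imsetP=> x0 Gx0 -> /(subsetP (class_subG Gx0 (subxx G))). Qed.

Lemma memJ_classes G A x g : A \in classes G -> x \in A -> g \in G -> x ^ g \in A.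
Proof. by case/imsetP=> x0 _ -> xA Gg; rewrite -(classGidr x0 Gg) memJ_conjg. Qed.

Lemma lcoset_mulVg H c u v : u \in c *: H -> v \in c *: H -> u^-1 * v \in H.
Proof. by move=> Hu Hv; rewrite -mem_lcoset (lcoset_transl _ Hv) lcoset_sym. Qed.

Lemma lcoset_conjl_commg H c x y k :
  y \in 'N(H) -> x * y \in c *: H -> x ^ k * y \in c *: H -> [~ x, k] \in H.
Proof.
move=> nHy Hxy Hxky; have := lcoset_mulVg Hxy Hxky.
suff -> : (x * y)^-1 * (x ^ k * y) = [~ x, k] ^ y by rewrite memJ_norm.
by rewrite commgEl invMg [RHS]conjgE !mulgA.
Qed.

Lemma lcoset_conjr_commg H c x y k :
  x * y \in c *: H -> x * y ^ k \in c *: H -> [~ y, k] \in H.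
Proof.
move=> Hxy Hxyk; have := lcoset_mulVg Hxy Hxyk.
by rewrite invMg -mulgA mulKg commgEl.
Qed.

Section CentralCommutators.

Variables (N : {group gT}) (x : gT).
Hypothesis commNx_center : {in N, forall k, [~ x, k] \in 'Z(N)}.

Lemma commgM_center k l : k \in N -> l \in N -> [~ x, k * l] = [~ x, k] * [~ x, l].
Proof.
move=> Nk Nl; have /centerP[_ cNxk] := commNx_center Nk.
have /centerP[Zxl _] := commNx_center Nl.
have fix_xk : [~ x, k] ^ l = [~ x, k] by apply/conjg_fixP/commgP/cNxk.
by rewrite commgMJ fix_xk (cNxk _ Zxl).
Qed.

Lemma conjgC_center k l : k \in N -> l \in N -> x ^ (k * l) = x ^ (l * k).
Proof.
move=> Nk Nl; have /centerP[Zxk _] := commNx_center Nk.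
have /centerP[_ cNxl] := commNx_center Nl.
by rewrite !conjg_mulR !commgM_center // (cNxl _ Zxk).
Qed.

Lemma der1_sub_cent1 : [~: N, N] \subset 'C[x].
Proof.
rewrite gen_subG; apply/subsetP=> _ /imset2P[n m Nn Nm ->].
apply/cent1P/commute_sym/commgP/conjg_fixP.
have -> : [~ n, m] = (n^-1 * m^-1) * (n * m) by rewrite commgEl conjgE !mulgA.
by rewrite conjgM conjgC_center ?groupV // -invMg conjgKV.
Qed.

End CentralCommutators.

Lemma der1_sub_centI N A :
  {in A & N, forall x k, [~ x, k] \in 'Z(N)} -> [~: N, N] \subset 'C_N(A).
Proof.
move=> commNA_center; rewrite subsetI der1_subG centsC.
apply/subsetP=> x Ax; rewrite -sub_cent1.
by apply: der1_sub_cent1 => k Nk; apply: commNA_center.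
Qed.

End CommutatorsInCenter.

Theorem lemma3p2 (gT : finGroupType) (G N : {group gT}) (A B : {set gT})
    (a b : gT) :
  N <| G -> A \in classes G -> B \in classes G ->
  a \in A -> b \in B ->
  A * B \subset (a * b) *: 'Z(N) ->
  [~: N, N] \subset 'C_N(A) :&: 'C_N(B) /\
  (N / 'C_N(A))^`(1) = 1.
Proof.
move=> nsNG clA clB aA bB sAB_coset.
have sNG k : k \in N -> k \in G := subsetP (normal_sub nsNG) k.
have nZG : G \subset 'N('Z(N)) := char_norm_trans (center_char N) (normal_norm nsNG).
have inAB x y : x \in A -> y \in B -> x * y \in (a * b) *: 'Z(N).
  by move=> xA yB; apply: (subsetP sAB_coset); apply: mem_mulg.
have sN'CA : [~: N, N] \subset 'C_N(A).
  apply: der1_sub_centI => x k xA Nk.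
  apply: (lcoset_conjl_commg (y := b) (c := a * b)).
  - exact: subsetP nZG b (classes_subG clB bB).
  - exact: inAB.
  - exact: inAB (memJ_classes clA xA (sNG k Nk)) bB.
have sN'CB : [~: N, N] \subset 'C_N(B).
  apply: der1_sub_centI => y k yB Nk.
  apply: (lcoset_conjr_commg (x := a) (c := a * b)).
  - exact: inAB.
  - exact: inAB aA (memJ_classes clB yB (sNG k Nk)).
split; first by rewrite subsetI sN'CA.
by apply/derG1P; apply: sub_der1_abelian.
Qed.
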